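(* Let $\theta(q,x):=\sum_{j=0}^{\infty}q^{j(j+1)/2}x^j$ and $w:=3/\sqrt{2}$. For all $(q,t)\in[0.6,0.75]\times[1,w]$, one has $\theta(q,-t+wi)\neq 0$. *)

From Stdlib Require Import Reals.
From Coquelicot Require Import Coquelicot.
Open Scope R_scope.

(* j-th term of theta(q,x) = sum_{j>=0} q^{j(j+1)/2} x^j ; j(j+1)/2 is an exact nat division *)
Definition theta_term (q : R) (x : C) (j : nat) : C :=
  Cmult (RtoC (q ^ (j * (j + 1) / 2)%nat)) (Cpow x j).

Definition theta_is (q : R) (x : C) (l : C) : Prop :=
  is_series (theta_term q x) l.

Definition w : R := 3 / sqrt 2.

From Stdlib Require Import ZArith Lia Lra List.
From Stdlib Require Import Reals.
From Coquelicot Require Import Coquelicot.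
Import ListNotations.
Open Scope R_scope.

(* Split θ(q, -t + wi) into the sum S of its first 12 terms and the tail.
   For q ≤ 3/4 and |x| ≤ 3 the term of index 12 is below 1/1000 and the later
   ones at least halve at each step, so the tail has modulus at most 2/1000.
   Since w² = 9/2, Re S is a polynomial in q and t.  Substituting
   q = (27 + 3u)/40 and t = (25 + 9v)/16, which maps [-1,1]² onto
   [0.6, 0.75] × [1, 17/8] ⊇ [0.6, 0.75] × [1, w], turns 40^66 16^11 Re S into an
   integer polynomial in u, v whose constant coefficient exceeds the sum of the
   absolute values of all its other coefficients by at least 40^66 16^11 / 100;
   this is checked by computation.  Hence Re θ ≥ 1/100 - 2/1000 > 0. *)

(* Polynomials are lists of coefficients, constant coefficient first. *)
Section ListPolynomials.

Variables (A : Type) (add mul : A -> A -> A) (zero one : A).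

Fixpoint ladd (p r : list A) : list A :=
  match p, r with
  | [], _ => r
  | _, [] => p
  | a :: p', b :: r' => add a b :: ladd p' r'
  end.

Fixpoint lmul (p r : list A) : list A :=
  match p with
  | [] => []
  | a :: p' => ladd (map (mul a) r) (zero :: lmul p' r)
  end.

Fixpoint lpow (p : list A) (n : nat) : list A :=
  match n with O => [one] | S n' => lmul p (lpow p n') end.

Variable ev : A -> R.

Fixpoint leval (x : R) (p : list A) : R :=
  match p with [] => 0 | a :: p' => ev a + x * leval x p' end.

Hypothesis ev_add : forall a b, ev (add a b) = ev a + ev b.
Hypothesis ev_mul : forall a b, ev (mul a b) = ev a * ev b.
Hypothesis ev_zero : ev zero = 0.
Hypothesis ev_one : ev one = 1.

Lemma leval_add x p r : leval x (ladd p r) = leval x p + leval x r.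
Proof.
  revert r; induction p as [|a p IH]; intros [|b r]; simpl; try ring.
  rewrite IH, ev_add; ring.
Qed.

Lemma leval_map_mul x a p : leval x (map (mul a) p) = ev a * leval x p.
Proof. induction p as [|b p IH]; simpl; [ring|]. rewrite IH, ev_mul; ring. Qed.

Lemma leval_mul x p r : leval x (lmul p r) = leval x p * leval x r.
Proof.
  induction p as [|a p IH]; simpl; [ring|].
  rewrite leval_add, leval_map_mul; simpl. rewrite IH, ev_zero; ring.
Qed.

Lemma leval_pow x p n : leval x (lpow p n) = leval x p ^ n.
Proof.
  induction n as [|n IH]; simpl; [rewrite ev_one; ring|].
  rewrite leval_mul, IH; ring.
Qed.

Variables (bound lower : A -> Z).

Fixpoint lbound (p : list A) : Z :=
  match p with [] => 0%Z | a :: p' => (bound a + lbound p')%Z end.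

Definition llower (p : list A) : Z :=
  match p with [] => 0%Z | a :: p' => (lower a - lbound p')%Z end.

Hypothesis ev_bound : forall a, Rabs (ev a) <= IZR (bound a).
Hypothesis lower_ev : forall a, IZR (lower a) <= ev a.

Lemma leval_lbound x p : Rabs x <= 1 -> Rabs (leval x p) <= IZR (lbound p).
Proof.
  intro Hx; induction p as [|a p IH]; simpl.
  - rewrite Rabs_R0; lra.
  - rewrite plus_IZR.
    eapply Rle_trans; [apply Rabs_triang|]. rewrite Rabs_mult.
    pose proof (ev_bound a). pose proof (Rabs_pos x). pose proof (Rabs_pos (leval x p)).
    nra.
Qed.

Lemma llower_leval x p : Rabs x <= 1 -> IZR (llower p) <= leval x p.
Proof.
  intro Hx; destruct p as [|a p]; simpl; [lra|].
  rewrite minus_IZR.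
  assert (Htail : Rabs (x * leval x p) <= IZR (lbound p)).
  { rewrite Rabs_mult. pose proof (leval_lbound x p Hx).
    pose proof (Rabs_pos x). pose proof (Rabs_pos (leval x p)). nra. }
  pose proof (lower_ev a). apply Rabs_le_between in Htail. lra.
Qed.

End ListPolynomials.

Arguments ladd {A}.
Arguments lmul {A}.
Arguments lpow {A}.
Arguments leval {A}.
Arguments lbound {A}.
Arguments llower {A}.

Definition zp_add := ladd Z.add.
Definition zp_mul := lmul Z.add Z.mul 0%Z.
Definition zp_eval := leval IZR.
Definition zp_bound := lbound Z.abs.
Definition zp_lower := llower Z.abs (fun c => c).

Lemma zp_eval_add v p r : zp_eval v (zp_add p r) = zp_eval v p + zp_eval v r.
Proof. exact (leval_add _ _ _ plus_IZR v p r). Qed.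

Lemma zp_eval_mul v p r : zp_eval v (zp_mul p r) = zp_eval v p * zp_eval v r.
Proof. apply leval_mul; [exact plus_IZR | exact mult_IZR | reflexivity]. Qed.

Lemma zp_eval_bound v p : Rabs v <= 1 -> Rabs (zp_eval v p) <= IZR (zp_bound p).
Proof. apply leval_lbound. intro c. rewrite abs_IZR. apply Rle_refl. Qed.

Lemma zp_lower_eval v p : Rabs v <= 1 -> IZR (zp_lower p) <= zp_eval v p.
Proof. apply llower_leval; intro c; [rewrite abs_IZR|]; apply Rle_refl. Qed.

(* [list (list Z)] is Z[v][u]: the outer list is indexed by powers of u. *)
Definition zp2_add := ladd zp_add.
Definition zp2_mul := lmul zp_add zp_mul [].
Definition zp2_pow := lpow zp_add zp_mul [] [1%Z].
Definition zp2_eval (u v : R) := leval (zp_eval v) u.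
Definition zp2_lower := llower zp_bound zp_lower.

Lemma zp2_eval_add u v P Q :
  zp2_eval u v (zp2_add P Q) = zp2_eval u v P + zp2_eval u v Q.
Proof. exact (leval_add _ _ _ (zp_eval_add v) u P Q). Qed.

Lemma zp2_eval_mul u v P Q :
  zp2_eval u v (zp2_mul P Q) = zp2_eval u v P * zp2_eval u v Q.
Proof. apply leval_mul; [apply zp_eval_add | apply zp_eval_mul | reflexivity]. Qed.

Lemma zp2_eval_pow u v P n : zp2_eval u v (zp2_pow P n) = zp2_eval u v P ^ n.
Proof.
  apply leval_pow; [apply zp_eval_add | apply zp_eval_mul | reflexivity |].
  simpl. ring.
Qed.

Lemma zp2_eval_const u v c : zp2_eval u v [[c]] = IZR c.
Proof. simpl. ring. Qed.

Lemma zp2_lower_eval u v P :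
  Rabs u <= 1 -> Rabs v <= 1 -> IZR (zp2_lower P) <= zp2_eval u v P.
Proof.
  intros Hu Hv. apply llower_leval; [| |exact Hu].
  - intro p. now apply zp_eval_bound.
  - intro p. now apply zp_lower_eval.
Qed.

(* A pair (a, b) stands for a + b s i, where s² = K. *)
Definition zpc := (list (list Z) * list (list Z))%type.

Definition zpc_mul (K : Z) (x y : zpc) : zpc :=
  (zp2_add (zp2_mul (fst x) (fst y)) (zp2_mul [[(- K)%Z]] (zp2_mul (snd x) (snd y))),
   zp2_add (zp2_mul (fst x) (snd y)) (zp2_mul (snd x) (fst y))).

Fixpoint zpc_pow (K : Z) (x : zpc) (n : nat) : zpc :=
  match n with O => ([[1%Z]], []) | S n' => zpc_mul K x (zpc_pow K x n') end.

Definition zpc_eval (s u v : R) (x : zpc) : C :=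
  (zp2_eval u v (fst x), s * zp2_eval u v (snd x)).

Lemma zpc_eval_mul K s u v x y : s * s = IZR K ->
  zpc_eval s u v (zpc_mul K x y) = Cmult (zpc_eval s u v x) (zpc_eval s u v y).
Proof.
  intro Hs. unfold zpc_eval, zpc_mul; cbn [fst snd].
  rewrite !zp2_eval_add, !zp2_eval_mul, zp2_eval_const, opp_IZR, <- Hs.
  apply injective_projections; simpl; ring.
Qed.

Lemma zpc_eval_pow K s u v x n : s * s = IZR K ->
  zpc_eval s u v (zpc_pow K x n) = Cpow (zpc_eval s u v x) n.
Proof.
  intro Hs. induction n as [|n IH]; simpl zpc_pow.
  - apply injective_projections; simpl; ring.
  - rewrite zpc_eval_mul, IH by exact Hs. reflexivity.
Qed.

Lemma norm_series_le {K : AbsRing} {V : NormedModule K} (a : nat -> V) (b : nat -> R)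
    (la : V) (lb : R) :
  (forall n, norm (a n) <= b n) -> is_series a la -> is_series b lb -> norm la <= lb.
Proof.
  intros Hab Ha Hb.
  assert (Hsum : forall n, norm (sum_n a n) <= sum_n b n).
  { induction n as [|n IH].
    - rewrite !sum_O. apply Hab.
    - rewrite !sum_Sn. eapply Rle_trans; [apply norm_triangle|].
      change (plus (sum_n b n) (b (S n))) with (sum_n b n + b (S n)).
      pose proof (Hab (S n)). lra. }
  apply (is_lim_seq_le _ _ (norm la) lb Hsum); [|exact Hb].
  eapply filterlim_comp; [exact Ha | apply filterlim_norm].
Qed.

Lemma is_series_shift {K : AbsRing} {V : NormedModule K} (a : nat -> V) (n : nat) (l : V) :
  is_series (fun k => a (S n + k)%nat) l -> is_series a (plus l (sum_n a n)).
Proof.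
  intro H. apply (is_series_decr_n a (S n)); [lia|]. simpl Nat.pred.
  rewrite <- plus_assoc.
  replace (plus (sum_n a n) (opp (sum_n a n))) with (zero : V)
    by (symmetry; exact (plus_opp_r (G := NormedModule.AbelianGroup K V) _)).
  rewrite plus_zero_r. exact H.
Qed.

Definition tri (j : nat) : nat := j * (j + 1) / 2.

Lemma tri_S j : tri (S j) = (tri j + S j)%nat.
Proof.
  unfold tri. replace (S j * (S j + 1))%nat with (j * (j + 1) + S j * 2)%nat by ring.
  apply Nat.div_add. lia.
Qed.

Lemma tri_le_66 j : (j <= 11)%nat -> (tri j <= 66)%nat.
Proof.
  intro Hj. change 66%nat with (tri 11). apply Nat.Div0.div_le_mono.
  apply Nat.mul_le_mono; lia.
Qed.

Lemma w_sqr : w * w = 9 / 2.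
Proof.
  unfold w. pose proof (sqrt_lt_R0 2 ltac:(lra)).
  replace (3 / sqrt 2 * (3 / sqrt 2)) with (9 / (sqrt 2 * sqrt 2)) by (field; lra).
  rewrite sqrt_sqrt by lra. reflexivity.
Qed.

Lemma Cmod_theta_arg_le t : 0 <= t <= w -> Cmod (- t, w) <= 3.
Proof.
  intro Ht. pose proof (Cmod2_alt (- t, w)) as H2. simpl in H2.
  pose proof (Cmod_ge_0 (- t, w)). pose proof w_sqr. nra.
Qed.

(* [[27]; [3]] is 27 + 3u = 40q and ([[-25; -9]], [[1]]) is -25 - 9v + 16wi
   = 16(-t + wi), with (16w)² = 1152; the powers of 40 and 16 clear the
   denominators of the first 12 terms of θ. *)
Definition theta_cert_term (j : nat) : list (list Z) :=
  zp2_mul [[(40 ^ Z.of_nat (66 - tri j) * 16 ^ Z.of_nat (11 - j))%Z]]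
    (zp2_mul (zp2_pow [[27%Z]; [3%Z]] (tri j))
       (fst (zpc_pow 1152 ([[(-25)%Z; (-9)%Z]], [[1%Z]]) j))).

Fixpoint theta_cert (n : nat) : list (list Z) :=
  match n with
  | O => theta_cert_term O
  | S m => zp2_add (theta_cert m) (theta_cert_term n)
  end.

Lemma theta_cert_lower : (40 ^ 66 * 16 ^ 11 <= 100 * zp2_lower (theta_cert 11))%Z.
Proof. apply Z.leb_le. vm_compute. reflexivity. Qed.

Lemma zpc_pow_eval_re u t j :
  zp2_eval u ((16 * t - 25) / 9) (fst (zpc_pow 1152 ([[(-25)%Z; (-9)%Z]], [[1%Z]]) j)) =
  16 ^ j * Re (Cpow (- t, w) j).
Proof.
  set (v := (16 * t - 25) / 9).
  assert (Hs : 16 * w * (16 * w) = IZR 1152).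
  { replace (16 * w * (16 * w)) with (256 * (w * w)) by ring. rewrite w_sqr. lra. }
  assert (Hx : zpc_eval (16 * w) u v ([[(-25)%Z; (-9)%Z]], [[1%Z]]) = Cmult 16 (- t, w)).
  { apply injective_projections; simpl; unfold v; field. }
  pose proof (f_equal fst (zpc_eval_pow _ _ u v ([[(-25)%Z; (-9)%Z]], [[1%Z]]) j Hs)) as H.
  rewrite Hx, Cpow_mult_l, <- RtoC_pow in H. rewrite <- re_scal_l. exact H.
Qed.

Lemma theta_cert_term_eval q t j : (j <= 11)%nat ->
  zp2_eval ((40 * q - 27) / 3) ((16 * t - 25) / 9) (theta_cert_term j) =
  40 ^ 66 * 16 ^ 11 * Re (theta_term q (- t, w) j).
Proof.
  intro Hj. set (u := (40 * q - 27) / 3).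
  assert (Hq : zp2_eval u ((16 * t - 25) / 9) [[27%Z]; [3%Z]] = 40 * q)
    by (simpl; unfold u; field).
  unfold theta_cert_term, theta_term.
  rewrite !zp2_eval_mul, zp2_eval_pow, zp2_eval_const, Hq, zpc_pow_eval_re, re_scal_l.
  rewrite mult_IZR, <- !pow_IZR.
  assert (HT := tri_le_66 j Hj). fold (tri j).
  replace (40 ^ 66) with (40 ^ (66 - tri j) * 40 ^ tri j) by (rewrite <- pow_add; f_equal; lia).
  replace (16 ^ 11) with (16 ^ (11 - j) * 16 ^ j) by (rewrite <- pow_add; f_equal; lia).
  rewrite Rpow_mult_distr. ring.
Qed.

Lemma theta_cert_eval q t n : (n <= 11)%nat ->
  zp2_eval ((40 * q - 27) / 3) ((16 * t - 25) / 9) (theta_cert n) =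
  40 ^ 66 * 16 ^ 11 * Re (sum_n (theta_term q (- t, w)) n).
Proof.
  intro Hn. induction n as [|n IH]; simpl theta_cert.
  - rewrite sum_O. now apply theta_cert_term_eval.
  - rewrite zp2_eval_add, IH, theta_cert_term_eval, sum_Sn, re_plus by lia.
    simpl plus. ring.
Qed.

Lemma theta_partial_sum_re_ge q t : 6/10 <= q <= 3/4 -> 1 <= t <= 17/8 ->
  1/100 <= Re (sum_n (theta_term q (- t, w)) 11).
Proof.
  intros Hq Ht.
  assert (Hu : Rabs ((40 * q - 27) / 3) <= 1) by (apply Rabs_le; lra).
  assert (Hv : Rabs ((16 * t - 25) / 9) <= 1) by (apply Rabs_le; lra).
  pose proof (zp2_lower_eval _ _ (theta_cert 11) Hu Hv) as Hlow.
  rewrite theta_cert_eval in Hlow by lia.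
  pose proof (IZR_le _ _ theta_cert_lower) as Hcert.
  rewrite !mult_IZR in Hcert.
  change (40 ^ 66)%Z with (40 ^ Z.of_nat 66)%Z in Hcert.
  change (16 ^ 11)%Z with (16 ^ Z.of_nat 11)%Z in Hcert.
  rewrite <- !pow_IZR in Hcert.
  set (D := 40 ^ 66 * 16 ^ 11) in *.
  assert (HD : 0 < D) by (apply Rmult_lt_0_compat; apply pow_lt; lra).
  apply Rmult_le_reg_l with D; [exact HD | lra].
Qed.

Lemma theta_term_Cmod q x j : 0 <= q -> Cmod (theta_term q x j) = q ^ tri j * Cmod x ^ j.
Proof.
  intro Hq. unfold theta_term.
  rewrite Cmod_mult, Cmod_R, Cmod_pow, Rabs_pos_eq by (apply pow_le; exact Hq).
  reflexivity.
Qed.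

Lemma theta_term_Cmod_S q x j : 0 <= q ->
  Cmod (theta_term q x (S j)) = q ^ S j * Cmod x * Cmod (theta_term q x j).
Proof.
  intro Hq. rewrite !theta_term_Cmod, tri_S, pow_add by exact Hq. simpl. ring.
Qed.

Lemma theta_term_Cmod_S_le q x j : 0 <= q <= 3/4 -> Cmod x <= 3 -> (12 <= j)%nat ->
  Cmod (theta_term q x (S j)) <= 1/2 * Cmod (theta_term q x j).
Proof.
  intros Hq Hx Hj. rewrite theta_term_Cmod_S by lra.
  apply Rmult_le_compat_r; [apply Cmod_ge_0|].
  replace (S j) with (13 + (j - 12))%nat by lia. rewrite pow_add.
  assert (q ^ 13 <= (3/4) ^ 13) by (apply pow_incr; lra).
  assert (q ^ (j - 12) <= 1) by (rewrite <- (pow1 (j - 12)); apply pow_incr; lra).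
  assert (0 <= q ^ 13) by (apply pow_le; lra).
  assert (0 <= q ^ (j - 12)) by (apply pow_le; lra).
  assert (0 <= Cmod x) by apply Cmod_ge_0.
  assert ((3/4) ^ 13 * 3 <= 1/2) by (simpl; lra).
  assert (q ^ 13 * q ^ (j - 12) <= (3/4) ^ 13) by nra.
  nra.
Qed.

Lemma theta_term_tail_le q x k : 0 <= q <= 3/4 -> Cmod x <= 3 ->
  Cmod (theta_term q x (12 + k)) <= 1/1000 * (1/2) ^ k.
Proof.
  intros Hq Hx. induction k as [|k IH].
  - rewrite Nat.add_0_r, theta_term_Cmod by lra. change (tri 12) with 78%nat.
    pose proof (Cmod_ge_0 x).
    assert (q ^ 78 <= (3/4) ^ 78) by (apply pow_incr; lra).
    assert (Cmod x ^ 12 <= 3 ^ 12) by (apply pow_incr; lra).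
    assert (0 <= q ^ 78) by (apply pow_le; lra).
    assert ((3/4) ^ 78 * 3 ^ 12 <= 1/1000) by (simpl; lra).
    assert (q ^ 78 * Cmod x ^ 12 <= (3/4) ^ 78 * 3 ^ 12)
      by (apply Rmult_le_compat; auto; apply pow_le; lra).
    simpl (_ ^ 0). lra.
  - rewrite Nat.add_succ_r. simpl ((1/2) ^ S k).
    eapply Rle_trans; [apply theta_term_Cmod_S_le; auto; lia | lra].
Qed.

Theorem lemma9 : forall q t : R,
  6/10 <= q <= 3/4 -> 1 <= t <= w ->
  exists l : C, theta_is q (-t, w)%R l /\ l <> (0, 0)%R.
Proof.
  intros q t Hq Ht.
  set (a := theta_term q (- t, w)).
  assert (Htail : forall k, norm (a (12 + k)%nat) <= 1/1000 * (1/2) ^ k).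
  { intro k. apply theta_term_tail_le; [lra | apply Cmod_theta_arg_le; lra]. }
  assert (Hgeom : is_series (fun k => 1/1000 * (1/2) ^ k) (2/1000)).
  { replace (2/1000) with (scal (1/1000) (/ (1 - 1/2))) by (compute; field).
    apply (is_series_scal_l (1/1000) (fun k => (1/2) ^ k)).
    apply is_series_geom. rewrite Rabs_pos_eq; lra. }
  destruct (ex_series_le _ _ Htail (ex_intro _ _ Hgeom)) as [r Hr].
  exists (plus r (sum_n a 11)). split.
  - exact (is_series_shift a 11 r Hr).
  - intro H0.
    pose proof (norm_series_le _ _ _ _ Htail Hr Hgeom) as Hr_small.
    change (norm r) with (Cmod r) in Hr_small.
    pose proof (re_le_Cmod r) as Hre. apply Rabs_le_between in Hre.
    assert (Hw : w <= 17/8) by (pose proof w_sqr; nra).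
    pose proof (theta_partial_sum_re_ge q t Hq ltac:(lra)) as HS. fold a in HS.
    apply (f_equal Re) in H0. change (Re (Cplus r (sum_n a 11)) = 0) in H0.
    rewrite re_plus in H0. lra.
Qed.
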